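(* Let $p,q$ be positive integers, with all notation as in the context (in particular $e_s$, $T_e$, $N_{T_c,e}$). Then for every positive integer $e$ and every positive integer $T_c>T_{e_s}$, $$2N_{T_c,e}=N_{2T_c,e+1}.$$
   Context: Let $\mathbf{C}=\begin{bmatrix}1 & p\\ q & 1+pq\end{bmatrix}$. The Cat map over $\mathbb{Z}_{2^e}$ is the bijection $v\mapsto \mathbf{C}v\bmod 2^e$ of $\mathbb{Z}_{2^e}^2$; a cycle of length $n$ is an orbit of a point $v$ for which $n$ is the least positive integer with $\mathbf{C}^n v\equiv v\pmod{2^e}$. $N_{T_c,e}$ denotes the number of cycles of length $T_c$ of the Cat map over $\mathbb{Z}_{2^e}$, and $T_e$ denotes its least period (least $n\ge1$ with $\mathbf{C}^n\equiv I\pmod{2^e}$). Put $A=pq+2$, $B=\sqrt{A^2-4}$, $G_n=\left(\frac{A+B}{2}\right)^n+\left(\frac{A-B}{2}\right)^n$, $H_n=\frac{1}{B}\left(\left(\frac{A+B}{2}\right)^n-\left(\frac{A-B}{2}\right)^n\right)$ (integers). For a nonzero integer $m$ let $v_2(m)$ be the largest $x$ with $2^x\mid m$. Let $e_p=v_2(p)$, $e_q=v_2(q)$; $T_1=3$ if $p,q$ are both odd, $T_1=2$ if exactly one of $p,q$ is odd, $T_1=1$ if both are even; $\hat h=-1$ if $e_p+e_q=0$ and $\hat h=\min(e_p,e_q)$ otherwise; $e_{s,h}=v_2(H_{T_1})$; $m_0=1$ if $\frac12 G_{T_1}\not\equiv 1\pmod 4$ and $m_0=0$ otherwise; $e_{s,g}=v_2\left(\frac12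 G_{2^{m_0}T_1}-1\right)$; $x_0=e_{s,h}+m_0+\hat h-e_{s,g}$ if $e_{s,g}<e_{s,h}+m_0+\hat h$ and $x_0=0$ otherwise; and $e_s=e_{s,h}+m_0+\hat h+x_0$. *)

From mathcomp Require Import all_boot all_order all_algebra.
Set Implicit Arguments. Unset Strict Implicit. Unset Printing Implicit Defensive.
Import Order.TTheory GRing.Theory Num.Theory.
Local Open Scope ring_scope.

Definition catC (p q : nat) : 'M[int]_2 :=
  \matrix_(i < 2, j < 2)
     (if i == 0 :> nat then (if j == 0 :> nat then 1 else p%:Z)
      else (if j == 0 :> nat then q%:Z else (1 + p * q)%N%:Z)).

Lemma pow2_gt0 (e : nat) : (0 < 2 ^ e)%N.
Proof. by rewrite expn_gt0. Qed.

Definition pt (e : nat) := ('I_(2 ^ e) * 'I_(2 ^ e))%type.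

Definition mkres (e m : nat) : 'I_(2 ^ e) := Ordinal (ltn_pmod m (pow2_gt0 e)).

Definition cat_map (p q e : nat) (v : pt e) : pt e :=
  (mkres e (1 * v.1 + p * v.2)%N, mkres e (q * v.1 + (1 + p * q) * v.2)%N).

Arguments cat_map : clear implicits.

Definition least_period (T : eqType) (f : T -> T) (v : T) (n : nat) : bool :=
  [&& (0 < n)%N, iter n f v == v &
      [forall m : 'I_n, (0 < m)%N ==> (iter m f v != v)]].

Definition cycle_of (T : finType) (f : T -> T) (v : T) : {set T} :=
  [set y | fconnect f v y].

Definition Ncycles (p q n e : nat) : nat :=
  #|[set cycle_of (cat_map p q e) v | v : pt e & least_period (cat_map p q e) v n]|.

Definition is_least_period_mx (p q e n : nat) : Prop :=
  (0 < n)%N /\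
  (forall i j, (((catC p q) ^+ n) i j = (1%:M : 'M[int]_2) i j %[mod (2 ^ e)%N%:Z])%Z) /\
  (forall m, (0 < m < n)%N ->
     exists i j, (((catC p q) ^+ m) i j <> (1%:M : 'M[int]_2) i j %[mod (2 ^ e)%N%:Z])%Z).

(* A = pq + 2;  G_n, H_n are the integer sequences
   G_n = ((A+B)/2)^n + ((A-B)/2)^n,  H_n = (((A+B)/2)^n - ((A-B)/2)^n)/B,
   given through the linear recurrence with characteristic polynomial
   x^2 - A x + 1 that they satisfy (both roots have sum A and product 1). *)
Definition Acoef (p q : nat) : int := (p * q + 2)%N%:Z.


Fixpoint Gseq (A : int) (n : nat) : int :=
  match n with
  | 0 => 2
  | 1 => A
  | (m.+1 as k).+1 => A * Gseq A k - Gseq A m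
  end.

Fixpoint Hseq (A : int) (n : nat) : int :=
  match n with
  | 0 => 0
  | 1 => 1
  | (m.+1 as k).+1 => A * Hseq A k - Hseq A m
  end.

Definition Gn (p q n : nat) : int := Gseq (Acoef p q) n.
Definition Hn (p q n : nat) : int := Hseq (Acoef p q) n.

Definition v2 (m : int) : nat := logn 2 `|m|%N.

Definition e_p (p : nat) : nat := logn 2 p.

Definition T1 (p q : nat) : nat :=
  if odd p && odd q then 3 else if odd p || odd q then 2 else 1.

Definition hhat (p q : nat) : int :=
  if (e_p p + e_p q == 0)%N then -1 else (minn (e_p p) (e_p q))%:Z.

Definition e_sh (p q : nat) : nat := v2 (Hn p q (T1 p q)).

Definition m0 (p q : nat) : nat :=
  if ((Gn p q (T1 p q) %/ 2)%Z %% 4)%Z != 1 then 1 else 0.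

Definition e_sg (p q : nat) : nat :=
  v2 ((Gn p q (2 ^ m0 p q * T1 p q)%N %/ 2)%Z - 1).

Definition x0 (p q : nat) : int :=
  let b := (e_sh p q)%:Z + (m0 p q)%:Z + hhat p q in
  if (e_sg p q)%:Z < b then b - (e_sg p q)%:Z else 0.

Definition e_s (p q : nat) : int :=
  (e_sh p q)%:Z + (m0 p q)%:Z + hhat p q + x0 p q.

From mathcomp Require Import all_boot all_order all_algebra.
From mathcomp Require Import zify ring.
Set Implicit Arguments. Unset Strict Implicit. Unset Printing Implicit Defensive.

(* Identify a point of Z_{2^e}^2 with an integer vector x and let P_e(x) be the
   least n > 0 with C^n x = x mod 2^e.  Put T = T_{e_s}.  The bounds e_s >= 1,
   and e_s >= 2 unless 4 | p or 4 | q (when every power of C is triangular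
   mod 4), show that M = C^T is 1 + 2Y with 1 + Y invertible mod 2.  Since
   C^(2n) - 1 = (C^n - 1)^2 + 2 (C^n - 1), C^(2n) fixing x mod 2^(e+1) then
   forces C^n to fix x mod 2^e for n = T 2^j; together with a computation in
   GL_2(GF(2)) this gives P_{e+1}(x) = 2 P_e(x) whenever P_e(x) does not divide
   T.  Hence, for T < T_c, the points of period 2 T_c mod 2^(e+1) are exactly
   the 4 lifts of the points of period T_c mod 2^e, and counting points by
   cycles gives 2 T_c N_{2T_c,e+1} = 4 T_c N_{T_c,e}. *)

(** * Cycles of a map on a finite type *)

Section Cycles.
Variables (T : finType) (f : T -> T).

Lemma iter_mod_period v n k : iter n f v = v -> iter k f v = iter (k %% n) f v.
Proof.
move=> fix_v; rewrite {1}(divn_eq k n) addnC iterD; congr (iter _ f _).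
by elim: (k %/ n) => [//|c IHc]; rewrite mulSn iterD IHc fix_v.
Qed.

Lemma least_periodP v n :
  reflect [/\ 0 < n, iter n f v = v & forall m, 0 < m < n -> iter m f v <> v]
          (least_period f v n).
Proof.
apply: (iffP and3P) => [[n_gt0 /eqP fix_v /forallP min_n]|[n_gt0 fix_v min_n]].
  split=> // m /andP[m_gt0 lt_mn].
  by have /implyP/(_ m_gt0)/eqP := min_n (Ordinal lt_mn).
split=> //; first exact/eqP.
by apply/forallP=> -[m lt_mn]; apply/implyP=> m_gt0; apply/eqP/min_n/andP.
Qed.

Lemma least_period_iter v n k : least_period f v n -> least_period f (iter k f v) n.
Proof.
case/least_periodP=> n_gt0 fix_v min_n.
have back : iter (n - k %% n) f (iter k f v) = v.
  by rewrite (iter_mod_period k fix_v) -iterD subnK // ltnW ?ltn_pmod.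
apply/least_periodP; split=> //; first by rewrite -iterD addnC iterD fix_v.
move=> m lt_mn fix_m; apply: (min_n m lt_mn).
by rewrite -{1}back -iterD addnC iterD fix_m back.
Qed.

Lemma cycle_of_least_period v n : least_period f v n ->
  cycle_of f v = [set iter k f v | k : 'I_n].
Proof.
case/least_periodP=> n_gt0 fix_v _; apply/setP=> y; rewrite inE.
apply/idP/imsetP=> [vy|[k _ ->]]; last exact: fconnect_iter.
exists (Ordinal (ltn_pmod (findex f v y) n_gt0)) => //=.
by rewrite -iter_mod_period // iter_findex.
Qed.

Lemma card_cycle_of v n : least_period f v n -> #|cycle_of f v| = n.
Proof.
move=> per_v; rewrite (cycle_of_least_period per_v) card_imset ?card_ord //.
case/least_periodP: per_v => _ fix_v min_n.
suff neq_lt (i j : 'I_n) : i < j -> iter i f v <> iter j f v.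
  move=> i j eq_ij; apply: val_inj.
  by case: (ltngtP i j) => // [/neq_lt | /neq_lt/nesym].
move=> lt_ij eq_ij; apply: (min_n (n - j + i)); first by have := ltn_ord j; lia.
by rewrite iterD eq_ij -iterD subnK ?fix_v // ltnW.
Qed.

Lemma cycle_of_mem v n y : least_period f v n -> y \in cycle_of f v ->
  least_period f y n /\ cycle_of f y = cycle_of f v.
Proof.
move=> per_v; rewrite {1}(cycle_of_least_period per_v).
case/imsetP=> k _ ->; split; first exact: least_period_iter.
case/least_periodP: per_v => _ fix_v _.
have back : fconnect f (iter k f v) v.
  have per_k : iter (n - k) f (iter k f v) = v by rewrite -iterD subnK // ltnW.
  by rewrite -[X in fconnect _ _ X]per_k fconnect_iter.
apply/setP=> z; rewrite !inE; apply/idP/idP; last exact: connect_trans back.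
exact: connect_trans (fconnect_iter f k v).
Qed.

Lemma card_least_period n : 0 < n ->
  #|[set v | least_period f v n]| =
  n * #|[set cycle_of f v | v : T & least_period f v n]|.
Proof.
move=> n_gt0; set P := [set cycle_of f v | v : T & _].
have cover_P : cover P = [set v | least_period f v n].
  apply/setP=> y; rewrite inE; apply/bigcupP/idP=> [[_ /imsetP[v + ->]]|per_y].
    by rewrite inE => per_v /(cycle_of_mem per_v)[].
  by exists (cycle_of f y); [apply/imsetP; exists y; rewrite ?inE | rewrite inE connect0].
have triv_P : trivIset P.
  apply/trivIsetP=> _ _ /imsetP[v + ->] /imsetP[w + ->]; rewrite !inE => per_v per_w.
  apply: contraR => /pred0Pn[y /andP[/(cycle_of_mem per_v)[_ <-]]].
  by case/(cycle_of_mem per_w) => _ ->.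
rewrite -cover_P -(eqP triv_P) mulnC -sum_nat_const.
by apply: eq_bigr => A /imsetP[v]; rewrite inE => per_v ->; apply: card_cycle_of.
Qed.

End Cycles.

(** * Two-by-two matrices over GF(2) *)

(* 2x2 matrices and 2-vectors over GF(2), entries listed row by row;
   [geom2b Z u k] is (1 + Z + ... + Z^(k-1)) u. *)
Definition mx2b := (bool * bool * bool * bool)%type.
Definition vec2b := (bool * bool)%type.

Definition mulmx2b (a b : mx2b) : mx2b :=
  let: (a00, a01, a10, a11) := a in let: (b00, b01, b10, b11) := b in
  ((a00 && b00) (+) (a01 && b10), (a00 && b01) (+) (a01 && b11),
   (a10 && b00) (+) (a11 && b10), (a10 && b01) (+) (a11 && b11)).

Definition mulmxv2b (a : mx2b) (v : vec2b) : vec2b :=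
  let: (a00, a01, a10, a11) := a in let: (v0, v1) := v in
  ((a00 && v0) (+) (a01 && v1), (a10 && v0) (+) (a11 && v1)).

Definition addv2b (v w : vec2b) : vec2b := (v.1 (+) w.1, v.2 (+) w.2).

Definition mx2b1 : mx2b := (true, false, false, true).

Definition expmx2b (Z : mx2b) k := iter k (mulmx2b Z) mx2b1.

Definition geom2b (Z : mx2b) (u : vec2b) k :=
  iter k (fun h => addv2b (mulmxv2b Z h) u) (false, false).

Lemma expmx2b_geom2b_periodic Z u k : 2 <= k ->
  expmx2b Z (k + 12) = expmx2b Z k /\ geom2b Z u (k + 12) = geom2b Z u k.
Proof.
have [base_exp base_geom] : expmx2b Z 14 = expmx2b Z 2 /\ geom2b Z u 14 = geom2b Z u 2.
  by move: Z u => [[[[] []] []] []] [[] []]; split; vm_compute.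
elim: k => [//|k IHk]; rewrite leq_eqVlt => /orP[/eqP <- //|/IHk[eq_exp eq_geom]].
by rewrite addSn /expmx2b /geom2b !iterS -/(expmx2b _ _) -/(geom2b _ _ _) eq_exp eq_geom.
Qed.

(* An element of odd order of GL_2(GF(2)) is either 1 or of order 3, and in
   the latter case 1 + Z + Z^2 = 0, so that all geometric sums of length
   divisible by 3 vanish. *)
Lemma geom2b_neq0_fixed Z u r : odd r -> expmx2b Z r = mx2b1 ->
  geom2b Z u r <> (false, false) -> mulmxv2b Z u = u.
Proof.
elim/ltn_ind: r => r IHr odd_r exp_r geom_r.
have [lt_r14|le14r] := ltnP r 14.
  have small : all (fun r => ~~ odd r || (expmx2b Z r != mx2b1) ||
                  (geom2b Z u r == (false, false)) || (mulmxv2b Z u == u)) (iota 0 14).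
    by move: Z u {IHr exp_r geom_r} => [[[[] []] []] []] [[] []]; vm_compute.
  move/allP/(_ r): small; rewrite mem_iota lt_r14 odd_r exp_r eqxx /= => /(_ isT).
  by case: eqP => //= _ /eqP.
have r12E : r = r - 12 + 12 by lia.
have [|eq_exp eq_geom] := @expmx2b_geom2b_periodic Z u (r - 12); first lia.
apply: (IHr (r - 12)); first by lia.
- by move: odd_r; rewrite {1}r12E oddD addbF.
- by rewrite -eq_exp -r12E.
- by rewrite -eq_geom -r12E.
Qed.

Lemma geom2b2_fixed Z u : mulmxv2b Z u = u -> geom2b Z u 2 = (false, false).
Proof. by move: Z u => [[[[] []] []] []] [[] []]. Qed.

Import Order.TTheory GRing.Theory Num.Theory.
Local Open Scope ring_scope.

(** * Integer matrices modulo powers of 2 *)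

Definition dvdmx (d : int) m n (X : 'M[int]_(m, n)) := forall i j, (d %| X i j)%Z.

Section DvdMx.
Variables (d : int) (m n : nat).
Implicit Types X Y : 'M[int]_(m, n).

Lemma dvdmx0 : dvdmx d (0 : 'M_(m, n)).
Proof. by move=> i j; rewrite mxE dvdz0. Qed.

Lemma dvdmxD X Y : dvdmx d X -> dvdmx d Y -> dvdmx d (X + Y).
Proof. by move=> dX dY i j; rewrite mxE rpredD. Qed.

Lemma dvdmxN X : dvdmx d X -> dvdmx d (- X).
Proof. by move=> dX i j; rewrite mxE rpredN. Qed.

Lemma dvdmxB X Y : dvdmx d X -> dvdmx d Y -> dvdmx d (X - Y).
Proof. by move=> dX dY; apply/dvdmxD/dvdmxN. Qed.

Lemma dvdmx_trans d' X : (d' %| d)%Z -> dvdmx d X -> dvdmx d' X.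
Proof. by move=> dd' dX i j; apply: dvdz_trans (dX i j). Qed.

Lemma dvdmx_double X : dvdmx d X -> dvdmx (2 * d) (X + X).
Proof. by move=> dX i j; rewrite mxE -mulr2n -[_ *+ 2]mulr_natl dvdz_mul. Qed.

End DvdMx.

Lemma dvdmx_mul d1 d2 m n p (X : 'M[int]_(m, n)) (Y : 'M[int]_(n, p)) :
  dvdmx d1 X -> dvdmx d2 Y -> dvdmx (d1 * d2) (X *m Y).
Proof.
move=> dX dY i j; rewrite mxE; apply: (big_ind (fun z => _ %| z)%Z) => //.
  by move=> *; rewrite rpredD.
by move=> l _; rewrite dvdz_mul.
Qed.

Lemma dvdmx_mull d m n p (X : 'M[int]_(m, n)) (Y : 'M[int]_(n, p)) :
  dvdmx d Y -> dvdmx d (X *m Y).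
Proof. by move=> dY; rewrite -[d]mul1r; apply: dvdmx_mul => // i j; rewrite dvd1z. Qed.

Lemma dvdmx_mulr d m n p (X : 'M[int]_(m, n)) (Y : 'M[int]_(n, p)) :
  dvdmx d X -> dvdmx d (X *m Y).
Proof. by move=> dX; rewrite -[d]mulr1; apply: dvdmx_mul => // i j; rewrite dvd1z. Qed.

Lemma ord2P (i : 'I_2) : i = ord0 \/ i = ord_max.
Proof. by case: i => [[|[|//]] lt_i2]; [left | right]; apply: val_inj. Qed.

Lemma mulmx2E m (X : 'M[int]_2) (Y : 'M[int]_(2, m)) i j :
  (X *m Y) i j = X i ord0 * Y ord0 j + X i ord_max * Y ord_max j.
Proof.
by rewrite mxE !big_ord_recl big_ord0 addr0; congr (_ + X i _ * Y _ j); apply: val_inj.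
Qed.

Lemma mx1_2E (i j : 'I_2) : (1 : 'M[int]_2) i j = (i == j)%:R.
Proof. exact: mxE. Qed.

Lemma mulmx2E_neq m (X : 'M[int]_2) (Y : 'M[int]_(2, m)) i j : i != j ->
  forall k l, (X *m Y) k l = X k i * Y i l + X k j * Y j l.
Proof.
by case: (ord2P i) => ->; case: (ord2P j) => -> // _ k l; rewrite mulmx2E // addrC.
Qed.

Lemma Posz_exp2 e : (2 ^ e)%N%:Z = 2 ^+ e :> int.
Proof. by rewrite -natz natrX. Qed.

Lemma sqr_subr1 (R : pzRingType) (Y : R) :
  Y ^+ 2 - 1 = (Y - 1) * (Y - 1) + ((Y - 1) + (Y - 1)).
Proof. by rewrite mulrBl !mulrBr !mulr1 !mul1r -expr2 addrA subrK addrA subrK. Qed.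

Lemma dvdz_pow2_odd e (D w : int) :
  ~~ (2 %| D)%Z -> (2 ^+ e %| D * w)%Z -> (2 ^+ e %| w)%Z.
Proof.
move=> odd_D; rewrite Gauss_dvdzr // coprimezE abszX /= coprimeXl // coprime2n.
by move: odd_D; rewrite dvdzE /= dvdn2 negbK.
Qed.

(* Solving the 2x2 system by Cramer's rule: its determinant
   (2 a1 + 1)(2 d1 + 1) - b1 c1 is odd because b1 or c1 is even. *)
Lemma dvdz_halve_system e (a b c d w0 w1 : int) :
  (4 %| a)%Z -> (4 %| d)%Z -> (2 %| b)%Z -> (2 %| c)%Z -> (4 %| b)%Z \/ (4 %| c)%Z ->
  (2 ^+ e.+1 %| a * w0 + b * w1 + (w0 + w0))%Z ->
  (2 ^+ e.+1 %| c * w0 + d * w1 + (w1 + w1))%Z ->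
  (2 ^+ e %| w0)%Z /\ (2 ^+ e %| w1)%Z.
Proof.
move=> /dvdzP[a1 ->] /dvdzP[d1 ->] /dvdzP[b1 ->] /dvdzP[c1 ->] bc4.
have -> : a1 * 4 * w0 + b1 * 2 * w1 + (w0 + w0) = 2 * ((2 * a1 + 1) * w0 + b1 * w1) by ring.
have -> : c1 * 2 * w0 + d1 * 4 * w1 + (w1 + w1) = 2 * (c1 * w0 + (2 * d1 + 1) * w1) by ring.
rewrite exprS !dvdz_mul2l // => dvd0 dvd1.
have odd_det : ~~ (2 %| (2 * a1 + 1) * (2 * d1 + 1) - b1 * c1)%Z.
  by apply/negP=> /dvdzP[z]; case: bc4 => /dvdzP[k] /=; lia.
split; apply: (dvdz_pow2_odd odd_det).
  have -> : ((2 * a1 + 1) * (2 * d1 + 1) - b1 * c1) * w0 =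
      (2 * d1 + 1) * ((2 * a1 + 1) * w0 + b1 * w1) -
      b1 * (c1 * w0 + (2 * d1 + 1) * w1) by ring.
  by rewrite rpredB // dvdz_mull.
have -> : ((2 * a1 + 1) * (2 * d1 + 1) - b1 * c1) * w1 =
    (2 * a1 + 1) * (c1 * w0 + (2 * d1 + 1) * w1) -
    c1 * ((2 * a1 + 1) * w0 + b1 * w1) by ring.
by rewrite rpredB // dvdz_mull.
Qed.

(* [halvable M]: M - 1 = 2 Y with 1 + Y invertible mod 2, so that
   M^2 - 1 = 4 Y (1 + Y) loses exactly one more factor 2 than M - 1. *)
Definition halvable (M : 'M[int]_2) :=
  [/\ dvdmx 2 (M - 1), (4 %| (M - 1) ord0 ord0)%Z, (4 %| (M - 1) ord_max ord_max)%Z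
    & (4 %| (M - 1) ord0 ord_max)%Z \/ (4 %| (M - 1) ord_max ord0)%Z].

Lemma halvable_dvdmx e (M : 'M[int]_2) k (w : 'M[int]_(2, k)) : halvable M ->
  dvdmx (2 ^+ e.+1) ((M ^+ 2 - 1) *m w) -> dvdmx (2 ^+ e) ((M - 1) *m w).
Proof.
rewrite sqr_subr1; case; move: (M - 1) => X even_X a4 d4 bc4.
rewrite mulmxDl -[X * X]/(X *m X) -mulmxA mulmxDl; move: (X *m w) => v dvd_v i j.
have := dvd_v ord0 j; have := dvd_v ord_max j.
rewrite mxE mulmx2E mxE => dvd1; rewrite mxE mulmx2E mxE => dvd0.
have [] := dvdz_halve_system a4 d4 (even_X _ _) (even_X _ _) bc4 dvd0 dvd1.
by case: (ord2P i) => ->.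
Qed.

Definition oddz (x : int) : bool := ~~ (2 %| x)%Z.

Lemma oddzD x y : oddz (x + y) = oddz x (+) oddz y.
Proof.
rewrite /oddz; case hx: (2 %| x)%Z; case hy: (2 %| y)%Z; case: (2 %| x + y)%Z / idP;
  rewrite //=; lia.
Qed.

Lemma oddzM x y : oddz (x * y) = oddz x && oddz y.
Proof.
rewrite /oddz; case hx: (2 %| x)%Z; case hy: (2 %| y)%Z; case: (2 %| x * y)%Z / idP;
  rewrite //=; nia.
Qed.

Lemma oddz_eq x y : (2 %| x - y)%Z -> oddz x = oddz y.
Proof.
rewrite /oddz => dxy; case hx: (2 %| x)%Z; case hy: (2 %| y)%Z => //=; lia.
Qed.

Definition mx2b_of (X : 'M[int]_2) : mx2b :=
  (oddz (X ord0 ord0), oddz (X ord0 ord_max),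
   oddz (X ord_max ord0), oddz (X ord_max ord_max)).

Definition vec2b_of (w : 'cV[int]_2) : vec2b :=
  (oddz (w ord0 ord0), oddz (w ord_max ord0)).

Lemma mx2b_ofM (X Y : 'M[int]_2) : mx2b_of (X * Y) = mulmx2b (mx2b_of X) (mx2b_of Y).
Proof. by rewrite /mx2b_of -[X * Y]/(X *m Y) !mulmx2E !oddzD !oddzM. Qed.

Lemma vec2b_ofM (X : 'M[int]_2) w : vec2b_of (X *m w) = mulmxv2b (mx2b_of X) (vec2b_of w).
Proof. by rewrite /vec2b_of !mulmx2E !oddzD !oddzM. Qed.

Lemma vec2b_ofD v w : vec2b_of (v + w) = addv2b (vec2b_of v) (vec2b_of w).
Proof. by rewrite /vec2b_of !mxE !oddzD. Qed.

Lemma mx2b_of1 : mx2b_of 1 = mx2b1.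
Proof. by rewrite /mx2b_of !mx1_2E. Qed.

Lemma mx2b_ofX (Y : 'M[int]_2) k : mx2b_of (Y ^+ k) = expmx2b (mx2b_of Y) k.
Proof. by elim: k => [|k IHk]; rewrite ?expr0 ?mx2b_of1 // exprS mx2b_ofM IHk. Qed.

Lemma mx2b_of_eq (X Y : 'M[int]_2) : dvdmx 2 (X - Y) -> mx2b_of X = mx2b_of Y.
Proof.
by move=> dXY; rewrite /mx2b_of; congr (_, _, _, _); apply: oddz_eq;
  [move: (dXY ord0 ord0) | move: (dXY ord0 ord_max)
  | move: (dXY ord_max ord0) | move: (dXY ord_max ord_max)]; rewrite !mxE.
Qed.

Lemma vec2b_of_eq0 w : vec2b_of w = (false, false) <-> dvdmx 2 w.
Proof.
rewrite /vec2b_of /oddz; split=> [[/negbFE dw0 /negbFE dw1] i j|dw].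
  by rewrite (ord1 j); case: (ord2P i) => ->.
by rewrite !dw.
Qed.

(** * Periods of integer vectors modulo powers of 2 *)

Section FixesMod.
Variables (d : nat) (C : 'M[int]_d).

Definition fixes_mod e n k (x : 'M[int]_(d, k)) := dvdmx (2 ^+ e) ((C ^+ n - 1) *m x).

Definition least_fix e k (x : 'M[int]_(d, k)) P :=
  [/\ (0 < P)%N, fixes_mod e P x & forall m, (0 < m < P)%N -> ~ fixes_mod e m x].

Lemma dvdmx_exp_pow2_subr1 n j :
  dvdmx 2 (C ^+ n - 1) -> dvdmx (2 ^+ j.+1) (C ^+ (n * 2 ^ j) - 1).
Proof.
move=> even_n; elim: j => [|j IHj]; first by rewrite muln1 expr1.
rewrite expnSr mulnA exprM sqr_subr1 exprS.
apply: dvdmxD; last exact: dvdmx_double.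
by apply: dvdmx_trans (dvdmx_mul IHj IHj); apply: dvdz_mul; rewrite // exprS dvdz_mulr.
Qed.

Variables (e k : nat) (x : 'M[int]_(d, k)).

Lemma exprD_subr1 n m : C ^+ (n + m) - 1 = C ^+ m * (C ^+ n - 1) + (C ^+ m - 1).
Proof. by rewrite addnC exprD mulrBr mulr1 addrA subrK. Qed.

Lemma fixes_mod0 : fixes_mod e 0 x.
Proof. by rewrite /fixes_mod expr0 subrr mul0mx; apply: dvdmx0. Qed.

Lemma fixes_modD n m : fixes_mod e n x -> fixes_mod e m x -> fixes_mod e (n + m) x.
Proof.
rewrite /fixes_mod => fix_n fix_m.
rewrite exprD_subr1 mulmxDl -[C ^+ m * _]/(C ^+ m *m _) -mulmxA.
by apply: dvdmxD => //; apply: dvdmx_mull.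
Qed.

Lemma fixes_mod_subl n m : fixes_mod e (n + m) x -> fixes_mod e n x -> fixes_mod e m x.
Proof.
rewrite /fixes_mod => + fix_n.
rewrite exprD_subr1 mulmxDl -[C ^+ m * _]/(C ^+ m *m _) -mulmxA => fix_nm.
rewrite -(addKr (C ^+ m *m ((C ^+ n - 1) *m x)) ((C ^+ m - 1) *m x)).
by apply: dvdmxD => //; apply/dvdmxN/dvdmx_mull.
Qed.

Lemma fixes_modMn c n : fixes_mod e n x -> fixes_mod e (c * n) x.
Proof.
move=> fix_n; elim: c => [|c IHc]; first exact: fixes_mod0.
by rewrite mulSn; apply: fixes_modD.
Qed.

Lemma fixes_mod_le e' n : (e' <= e)%N -> fixes_mod e n x -> fixes_mod e' n x.
Proof. by move=> le_e; apply: dvdmx_trans; rewrite dvdz_exp2l. Qed.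

Lemma least_fix_dvd P n : least_fix e x P -> fixes_mod e n x <-> (P %| n)%N.
Proof.
case=> P_gt0 fix_P min_P; split=> [fix_n|/dvdnP[c ->]]; last exact: fixes_modMn.
apply/negPn/negP; rewrite /dvdn -lt0n => rem_gt0; apply: (min_P (n %% P)%N).
  by rewrite rem_gt0 ltn_pmod.
by apply: (@fixes_mod_subl (n %/ P * P)); [rewrite -divn_eq | apply: fixes_modMn].
Qed.

Lemma least_fix_uniq P P' : least_fix e x P -> least_fix e x P' -> P = P'.
Proof.
move=> least_P least_P'; apply/eqP; rewrite eqn_dvd.
have [_ fix_P _] := least_P; have [_ fix_P' _] := least_P'.
by apply/andP; split; [apply/(least_fix_dvd _ least_P) | apply/(least_fix_dvd _ least_P')].
Qed.

Lemma fixes_mod_double n : dvdmx 2 (C ^+ n - 1) ->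
  fixes_mod e n x -> fixes_mod e.+1 (n * 2) x.
Proof.
rewrite /fixes_mod => even_n fix_n.
rewrite exprM sqr_subr1 mulmxDl mulmxDl -[_ * _]/(_ *m _) -mulmxA.
apply: dvdmxD; last by rewrite exprS; apply: dvdmx_double.
by rewrite exprS; apply: dvdmx_mul.
Qed.

End FixesMod.

Lemma fixes_mod_cong d (C : 'M[int]_d) e n k (x y : 'M[int]_(d, k)) :
  dvdmx (2 ^+ e) (x - y) -> fixes_mod C e n x -> fixes_mod C e n y.
Proof.
move=> dvd_xy fix_x; rewrite /fixes_mod -[y](subKr x) mulmxDr mulmxN.
by apply: dvdmxB => //; apply: dvdmx_mull.
Qed.

Lemma least_fix_cong d (C : 'M[int]_d) e P k (x y : 'M[int]_(d, k)) :
  dvdmx (2 ^+ e) (x - y) -> least_fix C e x P <-> least_fix C e y P.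
Proof.
suff cong (u v : 'M[int]_(d, k)) :
    dvdmx (2 ^+ e) (u - v) -> least_fix C e u P -> least_fix C e v P.
  by move=> dvd_xy; split; apply: cong; rewrite // -opprB; apply: dvdmxN.
move=> dvd_uv [P_gt0 fix_P min_P]; split=> [//||m lt_mP fix_m].
  exact: fixes_mod_cong fix_P.
apply: (min_P m lt_mP); apply: fixes_mod_cong fix_m.
by rewrite -opprB; apply: dvdmxN.
Qed.

Lemma dvdmx2_exprMn_subr1 d (C : 'M[int]_d) c n :
  dvdmx 2 (C ^+ n - 1) -> dvdmx 2 (C ^+ (c * n) - 1).
Proof.
move=> even_n; have := @fixes_modMn d C 1 d 1%:M c n.
by rewrite /fixes_mod !mulmx1 expr1; apply.
Qed.

Section FixesMod2.
Variables (C : 'M[int]_2) (e : nat) (x : 'cV[int]_2).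

Lemma fixes_mod_halve n : halvable (C ^+ n) ->
  fixes_mod C e.+1 (n * 2) x -> fixes_mod C e n x.
Proof. by rewrite /fixes_mod exprM; apply: halvable_dvdmx. Qed.

(* Write (C^P - 1) x = 2^e u; then (C^(kP) - 1) x = 2^e (1 + C^P + ... + C^((k-1)P)) u,
   and the parity of the geometric sum is decided in GF(2). *)
Lemma fixes_mod_double_odd P r : fixes_mod C e P x -> odd r ->
  dvdmx 2 (C ^+ (r * P) - 1) -> ~ fixes_mod C e.+1 (r * P) x ->
  fixes_mod C e.+1 (P * 2) x.
Proof.
move=> fix_P odd_r even_rP nfix_rP.
pose u := \matrix_(i, j) (((C ^+ P - 1) *m x) i j %/ 2 ^+ e)%Z.
have uE : (C ^+ P - 1) *m x = 2 ^+ e *: u.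
  by apply/matrixP=> i j; rewrite [RHS]mxE [u i j]mxE mulrC divzK //; apply: fix_P.
pose h k := iter k (fun y => C ^+ P *m y + u) 0.
have hE k : (C ^+ (k * P) - 1) *m x = 2 ^+ e *: h k.
  elim: k => [|k IHk]; first by rewrite mul0n expr0 subrr mul0mx scaler0.
  rewrite mulSnr exprD_subr1 mulmxDl -[_ * _]/(_ *m _) -mulmxA IHk uE.
  by rewrite /h iterS scalerDr scalemxAr.
have fixE k : fixes_mod C e.+1 (k * P) x <-> dvdmx 2 (h k).
  rewrite /fixes_mod hE exprSr; split=> dvd_h i j; move: (dvd_h i j);
    by rewrite mxE dvdz_mul2l // expf_neq0.
have h2b k : vec2b_of (h k) = geom2b (mx2b_of (C ^+ P)) (vec2b_of u) k.
  elim: k => [|k IHk]; first by rewrite /vec2b_of !mxE.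
  by rewrite /h iterS -/(h k) vec2b_ofD vec2b_ofM IHk.
have fixed_u : mulmxv2b (mx2b_of (C ^+ P)) (vec2b_of u) = vec2b_of u.
  apply: (geom2b_neq0_fixed odd_r).
    by rewrite -mx2b_ofX -exprM mulnC -mx2b_of1; apply: mx2b_of_eq.
  by rewrite -h2b => /vec2b_of_eq0/fixE.
by rewrite mulnC; apply/fixE/vec2b_of_eq0; rewrite h2b geom2b2_fixed.
Qed.

End FixesMod2.

Lemma odd_cofactor P Q r : (Q * 2 = r * P)%N -> ~~ (P %| Q)%N -> odd r.
Proof.
move=> QE; apply: contraR; rewrite -dvdn2 => /dvdnP[r' rE].
by apply/dvdnP; exists r'; move: QE; rewrite rE; lia.
Qed.

Section Lifting.
Variables (C : 'M[int]_2) (T0 : nat).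
Hypotheses (T0_gt0 : (0 < T0)%N) (halvable_T0 : halvable (C ^+ T0)).

Lemma even_expT0 : dvdmx 2 (C ^+ T0 - 1).
Proof. by case: halvable_T0. Qed.

Lemma halvable_expT0_pow2 j : halvable (C ^+ (T0 * 2 ^ j)).
Proof.
case: j => [|j]; first by rewrite muln1.
have dvd4 : dvdmx 4 (C ^+ (T0 * 2 ^ j.+1) - 1).
  apply: dvdmx_trans (dvdmx_exp_pow2_subr1 _ even_expT0).
  by apply/dvdzP; exists (2 ^+ j); rewrite !exprS; ring.
split; [|exact: dvd4 ..|by left].
by apply: dvdmx_trans dvd4; apply/dvdzP; exists 2.
Qed.

Lemma fixes_mod_T0_pow2 e k (x : 'M[int]_(2, k)) : fixes_mod C e (T0 * 2 ^ e) x.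
Proof.
apply/dvdmx_mulr/(dvdmx_trans _ (dvdmx_exp_pow2_subr1 e even_expT0)).
by rewrite exprS dvdz_mull.
Qed.

Lemma exists_least_fix e k (x : 'M[int]_(2, k)) : exists P, least_fix C e x P.
Proof.
pose fixb n := [forall i, forall j, (2 ^+ e %| ((C ^+ n - 1) *m x) i j)%Z].
have fixP n : reflect (fixes_mod C e n x) (fixb n).
  apply: (iffP forallP) => [dvd_x i j | dvd_x i]; last exact/forallP.
  exact: (forallP (dvd_x i)).
have ex_fix : exists n, (0 < n)%N && fixb n.
  by exists (T0 * 2 ^ e)%N; rewrite muln_gt0 T0_gt0 expn_gt0; apply/fixP/fixes_mod_T0_pow2.
case: (ex_minnP ex_fix) => P /andP[P_gt0 /fixP fix_P] min_P.
exists P; split=> // m /andP[m_gt0 lt_mP] /fixP fix_m.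
by have := min_P m; rewrite m_gt0 fix_m leqNgt lt_mP => /(_ isT).
Qed.

Lemma least_fix_dvd_T0 e (x : 'cV[int]_2) P :
  least_fix C e x P -> (P %| T0)%N -> fixes_mod C e.+1 (T0 * 2) x.
Proof.
by move=> least_P /(least_fix_dvd _ least_P) fix_T0; apply: fixes_mod_double even_expT0 _.
Qed.

(* Take the largest power 2^J with P not dividing Q = T0 2^J; then 2 Q = r P with
   r odd, and C^Q being halvable, C^(rP) cannot fix x modulo 2^(e+1). *)
Lemma least_fix_double e (x : 'cV[int]_2) P :
  least_fix C e x P -> ~~ (P %| T0)%N -> least_fix C e.+1 x (P * 2).
Proof.
move=> least_P ndvd_T0; have [P_gt0 fix_P _] := least_P.
have ex_dvd : exists j, (P %| T0 * 2 ^ j)%N.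
  by exists e; apply/(least_fix_dvd _ least_P)/fixes_mod_T0_pow2.
case: (ex_minnP ex_dvd) => -[|J]; first by rewrite muln1 (negbTE ndvd_T0).
set Q := (T0 * 2 ^ J)%N => dvd_2Q min_J.
have ndvd_Q : ~~ (P %| Q)%N by apply/negP => /min_J; rewrite ltnn.
have [r rE] : exists r, (Q * 2 = r * P)%N.
  by apply/dvdnP; rewrite /Q -mulnA -expnSr.
have odd_r := odd_cofactor rE ndvd_Q.
have nfix_rP : ~ fixes_mod C e.+1 (r * P) x.
  rewrite -rE => /(fixes_mod_halve (halvable_expT0_pow2 J)) /(least_fix_dvd _ least_P).
  exact/negP.
have even_rP : dvdmx 2 (C ^+ (r * P) - 1).
  by rewrite -rE /Q -mulnA mulnC; apply: dvdmx2_exprMn_subr1 even_expT0.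
split; first by rewrite muln_gt0 P_gt0.
  exact: fixes_mod_double_odd fix_P odd_r even_rP nfix_rP.
move=> n /andP[n_gt0 lt_n2P] fix_n.
have /dvdnP[c nE] : (P %| n)%N.
  by apply/(least_fix_dvd _ least_P); apply: fixes_mod_le fix_n.
have c1 : c = 1%N by nia.
by apply: nfix_rP; apply: fixes_modMn; move: fix_n; rewrite nE c1 mul1n.
Qed.

Lemma least_fix_succ_double e (x : 'cV[int]_2) Tc : (T0 < Tc)%N ->
  least_fix C e.+1 x (Tc * 2) <-> least_fix C e x Tc.
Proof.
move=> lt_T0Tc; have [P least_P] := exists_least_fix e x.
have [lt_T0P|le_PT0] := ltnP T0 P.
  have ndvd_T0 : ~~ (P %| T0)%N.
    by apply: contraL lt_T0P => /(dvdn_leq T0_gt0); rewrite -leqNgt.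
  have least_2P := least_fix_double least_P ndvd_T0.
  split=> [least_2Tc|least_Tc]; last by rewrite -(least_fix_uniq least_P least_Tc).
  by have /eqP := least_fix_uniq least_2P least_2Tc; rewrite eqn_mul2r => /eqP <-.
split=> [least_2Tc|least_Tc]; last first.
  by move: le_PT0; rewrite (least_fix_uniq least_P least_Tc) leqNgt lt_T0Tc.
have [dvd_T0|ndvd_T0] := boolP (P %| T0)%N.
  have /(least_fix_dvd _ least_2Tc)/dvdn_leq := least_fix_dvd_T0 least_P dvd_T0.
  by rewrite muln_gt0 T0_gt0 => /(_ isT); lia.
by have := least_fix_uniq (least_fix_double least_P ndvd_T0) least_2Tc; lia.
Qed.

End Lifting.

(** * The exponent e_s *)

Lemma v2_natz_ge n k : (0 < n)%N -> (2 ^ k %| n)%N -> (k <= v2 n%:Z)%N.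
Proof. by move=> n_gt0; rewrite /v2 -pfactor_dvdn. Qed.

Lemma v2_ge (m : int) k : m != 0 -> (2 ^+ k %| m)%Z -> (k <= v2 m)%N.
Proof. by move=> m_neq0; rewrite /v2 -pfactor_dvdn ?absz_gt0 // dvdzE abszX. Qed.

Lemma dvdz8_odd_sqr_subr1 (a : int) : ~~ (2 %| a)%Z -> (8 %| a * a - 1)%Z.
Proof.
move=> odd_a; have [c [->|->]] : exists c, a = 4 * c + 1 \/ a = 4 * c + 3.
  by exists (a %/ 4)%Z; lia.
  by apply/dvdzP; exists (2 * c * c + c); ring.
by apply/dvdzP; exists (2 * c * c + 3 * c + 1); ring.
Qed.

Lemma logn2_odd n : odd n -> logn 2 n = 0%N.
Proof. by move=> odd_n; rewrite logn_coprime // coprime2n. Qed.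

Lemma logn2_gt0 n : (0 < n)%N -> ~~ odd n -> (0 < logn 2 n)%N.
Proof. by move=> n_gt0 even_n; rewrite -pfactor_dvdn // expn1 dvdn2. Qed.

Lemma logn2_le1 n : (0 < n)%N -> ~~ (4 %| n)%N -> (logn 2 n <= 1)%N.
Proof. by move=> n_gt0 ndvd4; rewrite leqNgt -pfactor_dvdn. Qed.

Lemma e_s_sym p q : e_s p q = e_s q p.
Proof.
have AE : Acoef p q = Acoef q p by rewrite /Acoef mulnC.
by rewrite /e_s /x0 /e_sg /m0 /e_sh /Gn /Hn /hhat /T1 AE andbC orbC addnC minnC.
Qed.

Lemma e_s_ge p q : (e_sh p q)%:Z + (m0 p q)%:Z + hhat p q <= e_s p q.
Proof. by rewrite /e_s /x0; case: ifP => lt_sg; lia. Qed.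

Lemma e_s_ge_odd_odd p q : odd p -> odd q -> 2 <= e_s p q.
Proof.
move=> odd_p odd_q; apply: le_trans (e_s_ge p q).
rewrite /hhat /e_p !logn2_odd //= /e_sh /T1 odd_p odd_q /Hn /= subr0 mulr1.
have : (3 <= v2 (Acoef p q * Acoef p q - 1))%N.
  apply: v2_ge; first by rewrite subr_eq0 /Acoef -PoszM eqz_nat; nia.
  rewrite dvdz8_odd_sqr_subr1 // dvdzE /= dvdn2 addn2 /= oddM odd_p.
  by rewrite odd_q.
by set V := v2 _; lia.
Qed.

Lemma e_s_ge_odd_even p q : (0 < q)%N -> odd p -> ~~ odd q ->
  1 <= e_s p q /\ (~~ (4 %| q)%N -> 2 <= e_s p q).
Proof.
move=> q_gt0 odd_p even_q.
have : (1 <= v2 (Acoef p q))%N /\ (~~ (4 %| q)%N -> (2 <= v2 (Acoef p q))%N).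
  split=> [|ndvd4]; apply: v2_natz_ge; rewrite ?addn2 //; move: even_q; rewrite -dvdn2.
    by move=> even_q; rewrite -(addn2 (p * q)) dvdn_add ?dvdn_mull.
  by rewrite -addn2; nia.
have := e_s_ge p q; have := logn2_gt0 q_gt0 even_q.
rewrite /hhat /e_p (logn2_odd odd_p) add0n min0n eqn0Ngt => ->.
rewrite /e_sh /T1 odd_p (negbTE even_q) /Hn /= mulr1 !subr0.
by set V := v2 _ => le_es [v2_ge1 v2_ge2]; split=> [|/v2_ge2]; lia.
Qed.

Lemma m0_even_not4 p q : ~~ odd p -> ~~ odd q -> ~~ (4 %| p)%N -> ~~ (4 %| q)%N ->
  m0 p q = 1%N.
Proof.
move=> even_p even_q ndvd4p ndvd4q.
rewrite /m0 /T1 (negbTE even_p) (negbTE even_q) /Gn /Acoef /=.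
move: even_p even_q; rewrite -!dvdn2 => even_p even_q.
have [b ->] : exists b, p = (4 * b + 2)%N by exists (p %/ 4)%N; lia.
have [a ->] : exists a, q = (4 * a + 2)%N by exists (q %/ 4)%N; lia.
have -> : ((4 * b + 2) * (4 * a + 2) + 2 = 2 * (8 * (a * b) + 4 * a + 4 * b + 3))%N by ring.
by case: ifP => //; lia.
Qed.

Lemma e_s_ge_even_even p q : (0 < p)%N -> (0 < q)%N -> ~~ odd p -> ~~ odd q ->
  1 <= e_s p q /\ (~~ (4 %| p)%N -> ~~ (4 %| q)%N -> 2 <= e_s p q).
Proof.
move=> p_gt0 q_gt0 even_p even_q.
have lp := logn2_gt0 p_gt0 even_p; have lq := logn2_gt0 q_gt0 even_q.
have := e_s_ge p q; rewrite /hhat /e_p ifN; last by rewrite addn_eq0 negb_and -!lt0n lp.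
move=> le_es; split; first by lia.
move=> ndvd4p ndvd4q; move: le_es; rewrite m0_even_not4 //.
by have := logn2_le1 p_gt0 ndvd4p; have := logn2_le1 q_gt0 ndvd4q; lia.
Qed.

Lemma e_s_bounds p q : (0 < p)%N -> (0 < q)%N ->
  1 <= e_s p q /\ (~~ (4 %| p)%N -> ~~ (4 %| q)%N -> 2 <= e_s p q).
Proof.
wlog odd_p_or_even_q : p q / odd p || ~~ odd q.
  move=> wlog p_gt0 q_gt0; have [?|] := boolP (odd p || ~~ odd q); first exact: wlog.
  case/norP=> even_p /negbNE odd_q; rewrite e_s_sym.
  have [|//|//|es_ge1 es_ge2] := wlog q p; first by rewrite odd_q.
  by split=> // ? ?; apply: es_ge2.
move=> p_gt0 q_gt0; have [odd_p|even_p] := boolP (odd p).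
  have [odd_q|even_q] := boolP (odd q).
    have es_ge2 := e_s_ge_odd_odd odd_p odd_q.
    by split=> *; first by apply: le_trans es_ge2.
  by have [es_ge1 es_ge2] := e_s_ge_odd_even q_gt0 odd_p even_q; split=> // _ /es_ge2.
by rewrite (negbTE even_p) in odd_p_or_even_q; exact: e_s_ge_even_even.
Qed.

Lemma catCE p q : [/\ catC p q ord0 ord0 = 1, catC p q ord0 ord_max = p%:Z,
  catC p q ord_max ord0 = q%:Z & catC p q ord_max ord_max = (1 + p * q)%N%:Z].
Proof. by rewrite /catC !mxE. Qed.

Lemma triangular_mod4_exp (C : 'M[int]_2) i j n : i != j ->
  (4 %| C i j)%Z -> (4 %| C i i - 1)%Z -> (4 %| C j j - 1)%Z ->
  [/\ (4 %| (C ^+ n) i j)%Z, (4 %| (C ^+ n) i i - 1)%Z & (4 %| (C ^+ n) j j - 1)%Z].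
Proof.
move=> neq_ij dvd_ij dvd_ii dvd_jj; elim: n => [|n [IHij IHii IHjj]].
  by rewrite expr0 !mx1_2E !eqxx (negbTE neq_ij) subrr dvdz0.
rewrite exprSr -[_ * C]/(_ *m C) !(mulmx2E_neq _ _ neq_ij).
set M := C ^+ n; split.
- exact: rpredD (dvdz_mull _ dvd_ij) (dvdz_mulr _ IHij).
- have -> : M i i * C i i + M i j * C j i - 1 =
    (M i i - 1) * C i i + (C i i - 1) + M i j * C j i by ring.
  exact: rpredD (rpredD (dvdz_mulr _ IHii) dvd_ii) (dvdz_mulr _ IHij).
- have -> : M j i * C i j + M j j * C j j - 1 =
    M j i * C i j + (M j j - 1) * C j j + (C j j - 1) by ring.
  exact: rpredD (rpredD (dvdz_mull _ dvd_ij) (dvdz_mulr _ IHjj)) dvd_jj.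
Qed.

Lemma dvdmx_least_period_mx p q e T :
  is_least_period_mx p q e T -> dvdmx (2 ^+ e) (catC p q ^+ T - 1).
Proof.
case=> _ [fix_T _] i j; have := fix_T i j.
by rewrite Posz_exp2 !mxE => /eqP; rewrite eqz_mod_dvd.
Qed.

Lemma halvable_catC p q T : (0 < p)%N -> (0 < q)%N ->
  is_least_period_mx p q `|e_s p q| T -> halvable (catC p q ^+ T).
Proof.
move=> p_gt0 q_gt0 per_T; have [es_ge1 es_ge2] := e_s_bounds p_gt0 q_gt0.
have dvd_T := dvdmx_least_period_mx per_T.
have subr1E i j : (catC p q ^+ T - 1) i j = (catC p q ^+ T) i j - (i == j)%:R.
  by rewrite !mxE.
have [dvd4|] := boolP ((4 %| p)%N || (4 %| q)%N).
  have even_T : dvdmx 2 (catC p q ^+ T - 1).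
    by apply: dvdmx_trans dvd_T; rewrite -(expr1 2) dvdz_exp2l //; lia.
  have [C00 C01 C10 C11] := catCE p q.
  case/orP: dvd4 => [dvd4p | dvd4q].
    have [||| dvd01 dvd00 dvd11] := @triangular_mod4_exp (catC p q) ord0 ord_max T isT.
    - by rewrite C01 dvdzE.
    - by rewrite C00 subrr.
    - by rewrite C11 PoszD addrC addKr dvdzE /= dvdn_mulr.
    by split; rewrite ?subr1E /= ?subr0 //; left.
  have [||| dvd10 dvd11 dvd00] := @triangular_mod4_exp (catC p q) ord_max ord0 T isT.
  - by rewrite C10 dvdzE.
  - by rewrite C11 PoszD addrC addKr dvdzE /= dvdn_mull.
  - by rewrite C00 subrr.
  by split; rewrite ?subr1E /= ?subr0 //; right.
rewrite negb_or => /andP[ndvd4p ndvd4q].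
have dvd4_T : dvdmx 4 (catC p q ^+ T - 1).
  apply: dvdmx_trans dvd_T; rewrite (_ : 4 = 2 ^+ 2) // dvdz_exp2l //.
  by have := es_ge2 ndvd4p ndvd4q; lia.
split=> //; last by left.
by apply: dvdmx_trans dvd4_T; apply/dvdzP; exists 2.
Qed.

(** * Points of Z_{2^e}^2 as integer vectors *)

Definition vec_of_pt e (v : pt e) : 'cV[int]_2 :=
  \col_i ((if i == ord0 then v.1 else v.2) : nat)%:Z.

Lemma vec_of_ptE e (v : pt e) j :
  vec_of_pt v ord0 j = (v.1 : nat)%:Z /\ vec_of_pt v ord_max j = (v.2 : nat)%:Z.
Proof. by rewrite !mxE. Qed.

Lemma dvdz_modn_subr e m : (2 ^+ e %| (m %% 2 ^ e)%N%:Z - m%:Z)%Z.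
Proof.
apply/dvdzP; exists (- (m %/ 2 ^ e)%N%:Z).
by rewrite {2}(divn_eq m (2 ^ e)) PoszD PoszM Posz_exp2; ring.
Qed.

Lemma natz_eq_mod e a b : (a < 2 ^ e)%N -> (b < 2 ^ e)%N ->
  (2 ^+ e %| a%:Z - b%:Z)%Z -> a = b.
Proof.
move=> lt_a lt_b; rewrite -Posz_exp2 -eqz_mod_dvd !modz_nat => /eqP[].
by rewrite !modn_small.
Qed.

Section CatMapVectors.
Variables (p q e : nat).
Local Notation f := (cat_map p q e).

Lemma vec_of_pt_cat_map v : dvdmx (2 ^+ e) (vec_of_pt (f v) - catC p q *m vec_of_pt v).
Proof.
have [C00 C01 C10 C11] := catCE p q.
move=> i j; have -> : (vec_of_pt (f v) - catC p q *m vec_of_pt v) i j =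
    vec_of_pt (f v) i j - (catC p q *m vec_of_pt v) i j by rewrite !mxE.
rewrite mulmx2E; have [-> ->] := vec_of_ptE v j.
case: (ord2P i) => ->; rewrite mxE /= ?C00 ?C01 ?C10 ?C11 -!PoszM -PoszD.
  exact: dvdz_modn_subr.
exact: dvdz_modn_subr.
Qed.

Lemma vec_of_pt_iter n v :
  dvdmx (2 ^+ e) (vec_of_pt (iter n f v) - catC p q ^+ n *m vec_of_pt v).
Proof.
elim: n => [|n IHn]; first by rewrite expr0 mul1mx subrr; apply: dvdmx0.
have -> : vec_of_pt (iter n.+1 f v) - catC p q ^+ n.+1 *m vec_of_pt v =
    (vec_of_pt (f (iter n f v)) - catC p q *m vec_of_pt (iter n f v)) +
    catC p q *m (vec_of_pt (iter n f v) - catC p q ^+ n *m vec_of_pt v).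
  by rewrite exprS -mulmxA mulmxBr addrA subrK.
by apply: dvdmxD; [apply: vec_of_pt_cat_map | apply: dvdmx_mull].
Qed.

Lemma vec_of_pt_inj (v w : pt e) : dvdmx (2 ^+ e) (vec_of_pt v - vec_of_pt w) -> v = w.
Proof.
move=> dvd_vw; have := dvd_vw ord0 ord0; have := dvd_vw ord_max ord0.
rewrite !mxE; case: v w {dvd_vw} => [v1 v2] [w1 w2] /= dvd2 dvd1.
by congr pair; apply/val_inj/(natz_eq_mod (ltn_ord _) (ltn_ord _)).
Qed.

Lemma iter_cat_map_id n v : iter n f v = v <-> fixes_mod (catC p q) e n (vec_of_pt v).
Proof.
have dvd_iter := vec_of_pt_iter n v; rewrite /fixes_mod mulmxBl mul1mx.
split=> [iter_v | fix_v]; first by rewrite -opprB; apply: dvdmxN; rewrite -{1}iter_v.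
apply: vec_of_pt_inj; rewrite -(subrK (catC p q ^+ n *m vec_of_pt v) (vec_of_pt _)) -addrA.
exact: dvdmxD.
Qed.

Lemma least_period_cat_map n v :
  least_period f v n <-> least_fix (catC p q) e (vec_of_pt v) n.
Proof.
split=> [/least_periodP[n_gt0 iter_n min_n] | [n_gt0 fix_n min_n]].
  split=> // [|m lt_mn /iter_cat_map_id]; [exact/iter_cat_map_id | exact: min_n].
apply/least_periodP; split=> // [|m lt_mn /iter_cat_map_id].
  exact/iter_cat_map_id.
exact: min_n.
Qed.

End CatMapVectors.

Section Lifts.
Variable e : nat.

Definition pt_proj (w : pt e.+1) : pt e := (mkres e w.1, mkres e w.2).

Lemma vec_of_pt_proj w : dvdmx (2 ^+ e) (vec_of_pt w - vec_of_pt (pt_proj w)).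
Proof.
move=> i j; have -> : (vec_of_pt w - vec_of_pt (pt_proj w)) i j =
    - (vec_of_pt (pt_proj w) i j - vec_of_pt w i j) by rewrite !mxE opprB.
by rewrite rpredN; case: (ord2P i) => ->; rewrite !mxE; apply: dvdz_modn_subr.
Qed.

Definition pt_lift (x : pt e * (bool * bool)) : pt e.+1 :=
  (mkres e.+1 (x.1.1 + x.2.1 * 2 ^ e), mkres e.+1 (x.1.2 + x.2.2 * 2 ^ e)).

Definition pt_split (w : pt e.+1) : pt e * (bool * bool) :=
  (pt_proj w, (2 ^ e <= w.1, 2 ^ e <= w.2))%N.

Lemma pt_splitK : cancel pt_split pt_lift.
Proof.
have bitsK y : (y < 2 ^ e.+1)%N -> (y %% 2 ^ e + (2 ^ e <= y) * 2 ^ e = y)%N.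
  rewrite expnS; case: (leqP (2 ^ e) y) => [le_ey|lt_ye] lt_y /=.
    by rewrite -{1}(subnK le_ey) modnDr modn_small; lia.
  by rewrite modn_small //; lia.
by case=> w1 w2; congr pair; apply: val_inj; rewrite /= bitsK ?modn_small.
Qed.

Lemma pt_liftK : cancel pt_lift pt_split.
Proof.
have bitsK a (b : bool) : (a < 2 ^ e)%N ->
  [/\ ((a + b * 2 ^ e) %% 2 ^ e.+1 = a + b * 2 ^ e)%N,
      ((a + b * 2 ^ e) %% 2 ^ e = a)%N & (2 ^ e <= a + b * 2 ^ e)%N = b].
  move=> lt_a; split; first by rewrite modn_small // expnS; case: b; lia.
    by rewrite addnC modnMDl modn_small.
  by case: b; lia.
case=> -[v1 v2] [b1 b2]; have [E1 F1 G1] := bitsK v1 b1 (ltn_ord v1).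
have [E2 F2 G2] := bitsK v2 b2 (ltn_ord v2).
rewrite /pt_split /pt_proj /=; congr pair; last by rewrite E1 G1 E2 G2.
by congr pair; apply: val_inj; rewrite /= ?E1 ?F1 ?E2 ?F2.
Qed.

Lemma card_pt_proj_preim (A : {set pt e}) :
  #|[set w : pt e.+1 | pt_proj w \in A]| = (4 * #|A|)%N.
Proof.
rewrite -(card_imset _ (can_inj pt_splitK)).
have -> : pt_split @: [set w : pt e.+1 | pt_proj w \in A] = setX A [set: bool * bool].
  apply/setP=> x; rewrite !inE andbT; apply/imsetP/idP => [[w + ->]|x_A].
    by rewrite inE.
  by exists (pt_lift x); rewrite ?pt_liftK // inE -[pt_proj _]/(pt_split _).1 pt_liftK.
by rewrite cardsX cardsT card_prod card_bool mulnC.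
Qed.

End Lifts.

Lemma least_period_cat_map_succ p q T0 e Tc (w : pt e.+1) :
  (0 < T0)%N -> halvable (catC p q ^+ T0) -> (T0 < Tc)%N ->
  least_period (cat_map p q e.+1) w (Tc * 2) = least_period (cat_map p q e) (pt_proj w) Tc.
Proof.
move=> T0_gt0 halvable_T0 lt_T0Tc.
have lift := least_fix_succ_double T0_gt0 halvable_T0 e (vec_of_pt w) lt_T0Tc.
have proj := least_fix_cong (catC p q) Tc (vec_of_pt_proj w).
apply/idP/idP => /least_period_cat_map per_w; apply/least_period_cat_map.
  exact: proj.1 (lift.1 per_w).
exact: lift.2 (proj.2 per_w).
Qed.

Theorem theorem3 (p q : nat) (hp : (0 < p)%N) (hq : (0 < q)%N)
  (Tes : nat) (hTes : is_least_period_mx p q `|e_s p q|%N Tes)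
  (e Tc : nat) (he : (0 < e)%N) (hTc : (0 < Tc)%N) (hgt : (Tes < Tc)%N) :
  (2 * Ncycles p q Tc e = Ncycles p q (2 * Tc) e.+1)%N.
Proof.
have Tes_gt0 : (0 < Tes)%N by case: hTes.
have halvable_Tes := halvable_catC hp hq hTes.
have per_preim : [set w | least_period (cat_map p q e.+1) w (2 * Tc)] =
    [set w | pt_proj w \in [set v | least_period (cat_map p q e) v Tc]].
  apply/setP=> w; rewrite !inE mulnC.
  exact: least_period_cat_map_succ Tes_gt0 halvable_Tes hgt.
apply/eqP; rewrite -(eqn_pmul2l (_ : 0 < 2 * Tc)%N) ?muln_gt0 //.
rewrite /Ncycles -card_least_period ?muln_gt0 // per_preim card_pt_proj_preim.
by rewrite card_least_period //; apply/eqP; ring.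
Qed.
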